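(* Let $\Sigma$ be an alphabet with at least three letters. If $f$ and $g$ are unary congruence preserving functions $\mathcal{T}(\Sigma)\to\mathcal{T}(\Sigma)$ such that $f(a)=g(a)$ for all $a\in\Sigma$, then for all $t\in\mathcal{T}(\Sigma)$, $f(t)$ and $g(t)$ are similar.
   Context: Let $\Sigma$ be an alphabet not containing $0,1$. A binary tree over $\Sigma$ is a finite set $t \subseteq \{0,1\}^*\Sigma$ such that for any $ua, vb \in t$ with $ua \neq vb$, $u$ is not a prefix of $v$ and $v$ is not a prefix of $u$; $\mathcal{T}(\Sigma)$ is the set of such trees, $\mathbf 0=\emptyset$, each letter $a$ is identified with $\{a\}$, and $t\star t' = 0.t\cup 1.t'$. A congruence is an equivalence relation on $\mathcal{T}(\Sigma)$ compatible with $\star$. A function $f\colon\mathcal{T}(\Sigma)\to\mathcal{T}(\Sigma)$ is congruence preserving if for every congruence $\sim$, $t\sim t'$ implies $f(t)\sim f(t')$. Every map $\Sigma\to\mathcal{T}(\Sigma)$ extends uniquely to an endomorphism of $\langle\mathcal{T}(\Sigma),\star\rangle$. For $a\in\Sigma$, $\nu_a$ is the endomorphism sending every letter to $a$; $t,t'$ are similar if $\nu_a(t)=\nu_a(t')$ for some (equivalently every) $a\in\Sigma$. *)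

From HB Require Import structures.
From mathcomp Require Import all_boot.
From mathcomp Require Import finmap.
Set Implicit Arguments. Unset Strict Implicit. Unset Printing Implicit Defensive.
Local Open Scope fset_scope.

(* A word u a with u in {0,1}^* and a in Sigma is encoded as the pair (u, a),
   with 0 = false and 1 = true. *)
Definition word (S : finType) := (seq bool * S)%type.

Definition is_tree (S : finType) (t : {fset word S}) : bool :=
  all (fun x => all (fun y => (x == y) || (~~ prefix x.1 y.1 && ~~ prefix y.1 x.1))
                    (enum_fset t)) (enum_fset t).

Record tree (S : finType) := Tree { tval :> {fset word S}; tvalP : is_tree tval }.
HB.instance Definition _ (S : finType) := [isSub for @tval S].
HB.instance Definition _ (S : finType) := [Equality of tree S by <:].

Lemma is_treeP (S : finType) (t : {fset word S}) :
  reflect (forall x y, x \in t -> y \in t -> x != y ->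
             ~~ prefix x.1 y.1 && ~~ prefix y.1 x.1) (is_tree t).
Proof.
apply: (iffP allP) => [H x y xt yt nxy | H x xt].
  by have /allP/(_ y yt) := H x xt; rewrite (negbTE nxy).
apply/allP => y yt; case: eqP => [//|/eqP nxy] /=; exact: H.
Qed.

Definition shift (S : finType) (b : bool) (t : {fset word S}) : {fset word S} :=
  [fset (b :: x.1, x.2) | x in t].

Definition star_raw (S : finType) (t t' : {fset word S}) : {fset word S} :=
  shift false t `|` shift true t'.

Lemma star_is_tree (S : finType) (t t' : tree S) : is_tree (star_raw t t').
Proof.
have sh : forall b (u : tree S) x, x \in shift b u ->
    exists2 y, y \in (u : {fset _}) & x = (b :: y.1, y.2).
  move=> b u x /imfsetP [y yu ->]; by exists y.
apply/is_treeP => x y; rewrite !inE => /orP Hx /orP Hy nxy.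
have key : forall b c (u v : tree S) x y, x \in shift b u -> y \in shift c v ->
   (b != c) || ((u == v) && (b == c)) -> x != y ->
   ~~ prefix x.1 y.1 && ~~ prefix y.1 x.1.
  move=> b c u v x1 y1 /sh [x0 x0u ->] /sh [y0 y0v ->] /orP [bc|/andP[/eqP uv /eqP bc]] nxy1 /=.
    by rewrite (negbTE bc) eq_sym (negbTE bc).
  subst; rewrite eqxx /=; apply: (elimT (is_treeP _) (tvalP v)) => //.
  by apply: contraNneq nxy1 => ->.
case: Hx => Hx; case: Hy => Hy.
- by apply: (key false false t t) => //; rewrite !eqxx.
- by apply: (key false true t t').
- by apply: (key true false t' t).
- by apply: (key true true t' t') => //; rewrite !eqxx.
Qed.

Definition star (S : finType) (t t' : tree S) : tree S := Tree (star_is_tree t t').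

Lemma empty_is_tree (S : finType) : is_tree (fset0 : {fset word S}).
Proof. by apply/is_treeP => x y; rewrite inE. Qed.
Definition tree0 (S : finType) : tree S := Tree (@empty_is_tree S).

Lemma letter_is_tree (S : finType) (a : S) : is_tree [fset ([::], a)].
Proof. by apply/is_treeP => x y; rewrite !inE => /eqP -> /eqP ->; rewrite eqxx. Qed.
Definition letter (S : finType) (a : S) : tree S := Tree (letter_is_tree a).

Definition congruence (S : finType) (R : tree S -> tree S -> Prop) : Prop :=
  [/\ (forall t, R t t), (forall t t', R t t' -> R t' t),
      (forall t1 t2 t3, R t1 t2 -> R t2 t3 -> R t1 t3) &
      (forall t1 t1' t2 t2', R t1 t1' -> R t2 t2' -> R (star t1 t2) (star t1' t2'))].

Definition congruence_preserving (S : finType) (f : tree S -> tree S) : Prop :=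
  forall R : tree S -> tree S -> Prop, congruence R ->
    forall t t', R t t' -> R (f t) (f t').

(* nu_a: the endomorphism sending every letter to a; explicitly
   nu_a(t) = { u a | u b in t } (each leaf relabelled by a). *)
Lemma nu_is_tree (S : finType) (a : S) (t : tree S) :
  is_tree [fset (x.1, a) | x in (t : {fset word S})].
Proof.
apply/is_treeP => x y /imfsetP [x0 x0t ->] /imfsetP [y0 y0t ->] nxy /=.
apply: (elimT (is_treeP _) (tvalP t)) => //.
by apply: contraNneq nxy => ->.
Qed.
Definition nu (S : finType) (a : S) (t : tree S) : tree S := Tree (nu_is_tree a t).

Lemma nu_star (S : finType) (a : S) (t t' : tree S) :
  nu a (star t t') = star (nu a t) (nu a t').
Proof.
apply: val_inj => /=; apply/fsetP => x; apply/imfsetP/idP.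
  move=> [y]; rewrite !inE => /orP [] /imfsetP [z zt ->] ->; apply/orP.
    by left; apply/imfsetP; exists (z.1, a) => //; apply/imfsetP; exists z.
  by right; apply/imfsetP; exists (z.1, a) => //; apply/imfsetP; exists z.
rewrite !inE => /orP [] /imfsetP [z /imfsetP [w wt ->] ->].
  by exists (false :: w.1, w.2) => //; rewrite inE; apply/orP; left; apply/imfsetP; exists w.
by exists (true :: w.1, w.2) => //; rewrite inE; apply/orP; right; apply/imfsetP; exists w.
Qed.

Lemma nu_letter (S : finType) (a b : S) : nu a (letter b) = letter a.
Proof.
apply: val_inj => /=; apply/fsetP => x; apply/imfsetP/idP.
  by move=> [y]; rewrite !inE => /eqP -> ->.
by rewrite inE => /eqP ->; exists ([::], b); rewrite ?inE.
Qed.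

Definition similar (S : finType) (t t' : tree S) : Prop :=
  exists a : S, nu a t = nu a t'.

From mathcomp Require Import all_boot.
From mathcomp Require Import finmap.
Set Implicit Arguments. Unset Strict Implicit. Unset Printing Implicit Defensive.
Local Open Scope fset_scope.

(* Fix distinct letters a and c and put T = nu_a(t). The kernel of nu_a is a
   congruence identifying t with T, so it suffices to show f(T) = g(T).  Two
   further congruences identify T with a letter: the kernel of "leaves not
   labelled a" identifies T with a, and the kernel of the substitution c |-> T
   identifies T with c.  Hence f(T) and g(T) have the same leaves not labelled
   a and the same image under c |-> T.  Since no leaf of a tree lies below
   another one, these two data determine the tree.  Only two distinct letters
   are needed. *)

Section TreeLeaves.
Variable S : finType.
Implicit Types (a c : S) (s t T X Y : tree S) (x : word S).
Local Notation leaves t := (t : {fset word S}).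

Lemma in_shift_cons b (s : {fset word S}) b' r e :
  ((b' :: r, e) \in shift b s) = (b' == b) && ((r, e) \in s).
Proof.
apply/imfsetP/andP => [[y ys [-> -> ->]]|[/eqP -> rs]]; last by exists (r, e).
by rewrite eqxx -surjective_pairing.
Qed.

Lemma in_shift_nil b (s : {fset word S}) e : (([::], e) \in shift b s) = false.
Proof. by apply/imfsetP => -[y _ []]. Qed.

Lemma in_star_nil s1 s2 e : (([::], e) \in leaves (star s1 s2)) = false.
Proof. by rewrite /= !inE !in_shift_nil. Qed.

Lemma in_star_cons s1 s2 b r e :
  ((b :: r, e) \in leaves (star s1 s2)) = ((r, e) \in leaves (if b then s2 else s1)).
Proof. by rewrite /= !inE !in_shift_cons; case: b; rewrite ?andbT ?andbF ?orbF. Qed.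

Definition same_leaves (P : tree S -> word S -> Prop) s s' :=
  forall x, P s x <-> P s' x.

Lemma same_leaves_sym P s s' : same_leaves P s s' -> same_leaves P s' s.
Proof. by move=> Pss' x; symmetry. Qed.

Lemma same_leaves_congruence (P : tree S -> word S -> Prop) :
  (forall s1 s2 e, ~ P (star s1 s2) ([::], e)) ->
  (forall s1 s2 b r e, P (star s1 s2) (b :: r, e) <-> P (if b then s2 else s1) (r, e)) ->
  congruence (same_leaves P).
Proof.
move=> P_nil P_cons; split.
- by move=> t x.
- exact: same_leaves_sym.
- by move=> t1 t2 t3 P12 P23 x; split => [/P12/P23|/P23/P12].
- move=> t1 t1' t2 t2' P1 P2 [[|b r] e]; first by split => /P_nil.
  by rewrite !P_cons; case: b.
Qed.

Definition leaf_except a s x := x \in leaves s /\ x.2 != a.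

(* The leaves of the image of [s] under the endomorphism sending [c] to [T]
   and fixing the other letters. *)
Definition subst_leaf c T s x :=
  leaf_except c s x \/ exists v w, [/\ x.1 = v ++ w, (v, c) \in leaves s & (w, x.2) \in leaves T].

Lemma leaf_except_congruence a : congruence (same_leaves (leaf_except a)).
Proof.
apply: same_leaves_congruence => [s1 s2 e|s1 s2 b r e]; rewrite /leaf_except.
  by rewrite in_star_nil => -[].
by rewrite in_star_cons.
Qed.

Lemma subst_leaf_congruence c T : congruence (same_leaves (subst_leaf c T)).
Proof.
apply: same_leaves_congruence => [s1 s2 e|s1 s2 b r e]; rewrite /subst_leaf /leaf_except.
  rewrite in_star_nil => -[[]//|[[|??] [w []]]] //= _.
  by rewrite in_star_nil.
rewrite in_star_cons; split => -[Px|[v [w [/= vw vc wT]]]]; try by left.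
- case: v vw vc => [|b' v]; first by rewrite in_star_nil.
  move=> [<- ->]; rewrite in_star_cons => vc; right; by exists v, w.
- by right; exists (b :: v), w; rewrite in_star_cons /= vw.
Qed.

Lemma sub_of_same_leaves a c T X Y : a != c ->
  same_leaves (leaf_except a) X Y -> same_leaves (subst_leaf c T) X Y ->
  {subset leaves X <= leaves Y}.
Proof.
move=> ac eXY sXY x xX; have [xa|xna] := eqVneq x.2 a; last by case: (eXY x).1.
have : subst_leaf c T X x by left; split; rewrite // xa.
case/sXY => [[]//|[v [w [xvw vY _]]]].
(* The c-leaf of Y above x is also a leaf of X, and X is a tree. *)
have [vX _] : leaf_except a X (v, c) by apply/eXY; split; rewrite // eq_sym.
have vx : (v, c) != x by apply: contraNneq ac => vcx; rewrite -xa -vcx.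
by have := elimT (is_treeP _) (tvalP X) _ _ vX xX vx; rewrite /= xvw prefix_prefix.
Qed.

Lemma eq_of_same_leaves a c T X Y : a != c ->
  same_leaves (leaf_except a) X Y -> same_leaves (subst_leaf c T) X Y -> X = Y.
Proof.
move=> ac eXY sXY; apply/val_inj/fsetP => x; apply/idP/idP.
  exact: (sub_of_same_leaves ac eXY sXY).
exact: (sub_of_same_leaves ac (same_leaves_sym eXY) (same_leaves_sym sXY)).
Qed.

Lemma same_leaf_except_letter a T :
  (forall x, x \in leaves T -> x.2 = a) -> same_leaves (leaf_except a) (letter a) T.
Proof.
move=> Ta x; split => -[xs xna]; last by rewrite Ta ?eqxx in xna.
by move: xs xna; rewrite inE => /eqP ->; rewrite eqxx.
Qed.

Lemma same_subst_leaf_letter c T :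
  (forall x, x \in leaves T -> x.2 != c) -> same_leaves (subst_leaf c T) (letter c) T.
Proof.
move=> Tnc x; split => [[[xc xnc]|[v [w [xvw vc wT]]]]|[[xT _]|[v [w [_ vT _]]]]].
- by move: xc xnc; rewrite inE => /eqP ->; rewrite eqxx.
- move: vc; rewrite inE => /eqP[vnil].
  have xT : x \in leaves T by rewrite [x]surjective_pairing xvw vnil.
  by left; split; last exact: Tnc.
- by right; exists [::], x.1; split; rewrite ?inE -?surjective_pairing.
- by have := Tnc _ vT; rewrite eqxx.
Qed.

Lemma congruence_preserving_agree (R : tree S -> tree S -> Prop) f g s t :
  congruence_preserving f -> congruence_preserving g -> congruence R ->
  R s t -> f s = g s -> R (f t) (g t).
Proof.
move=> f_cp g_cp cR Rst fgs; have [_ Rsym Rtrans _] := cR.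
by apply: (Rtrans _ (f s)); [apply/Rsym/(f_cp _ cR) | rewrite fgs; apply: g_cp].
Qed.

Lemma congruence_preserving_eq_uniform f g a c T :
  congruence_preserving f -> congruence_preserving g -> a != c ->
  f (letter a) = g (letter a) -> f (letter c) = g (letter c) ->
  (forall x, x \in leaves T -> x.2 = a) -> f T = g T.
Proof.
move=> f_cp g_cp ac fga fgc Ta.
have Tnc x : x \in leaves T -> x.2 != c by move/Ta->.
apply: (eq_of_same_leaves ac).
  exact: congruence_preserving_agree (leaf_except_congruence a)
           (same_leaf_except_letter Ta) fga.
exact: congruence_preserving_agree (subst_leaf_congruence c T)
         (same_subst_leaf_letter Tnc) fgc.
Qed.

Lemma nu_congruence a : congruence (fun s s' => nu a s = nu a s').
Proof.
split => //; first by move=> ? ? ? -> ->.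
by move=> t1 t1' t2 t2' e1 e2; rewrite !nu_star e1 e2.
Qed.

Lemma nu_idem a t : nu a (nu a t) = nu a t.
Proof.
apply/val_inj/fsetP => x; apply/imfsetP/idP => [[y /imfsetP[z zt ->] ->]|xt].
  by apply/imfsetP; exists z.
by exists x => //; case/imfsetP: xt => z zt ->.
Qed.

Lemma nu_label a t x : x \in leaves (nu a t) -> x.2 = a.
Proof. by case/imfsetP => z _ ->. Qed.

Lemma nu_congruence_preserving f a t :
  congruence_preserving f -> nu a (f (nu a t)) = nu a (f t).
Proof. by move=> f_cp; apply: (f_cp _ (nu_congruence a)); rewrite nu_idem. Qed.

End TreeLeaves.

Theorem mainTheorem3 (S : finType) (HS : 3 <= #|S|)
  (f g : tree S -> tree S)
  (Hf : congruence_preserving f) (Hg : congruence_preserving g)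
  (Hfg : forall a : S, f (letter a) = g (letter a)) :
  forall t : tree S, similar (f t) (g t).
Proof.
move=> t; have /card_gt1P[a [c [_ _ ac]]] : 1 < #|S| by apply: leq_trans HS.
exists a; rewrite -(nu_congruence_preserving a t Hf) -(nu_congruence_preserving a t Hg).
by rewrite (congruence_preserving_eq_uniform Hf Hg ac (Hfg a) (Hfg c) (@nu_label _ a t)).
Qed.
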